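(* Let $V$ be a complex normed vector space, $x\in l^{\infty}(V)$ and $v\in V$. Then $x$ is strongly almost convergent to $v$ if and only if $p(x-\widetilde v)=0$.
   Context: $\mathbb{N}=\{1,2,3,\dots\}$. $l^{\infty}(V)$ is the space of bounded sequences $x=\{x_n\}_{n=1}^\infty$ in $V$ with norm $\|x\|_\infty=\sup_n\|x_n\|_V$. For $v\in V$, $\widetilde v=\{v,v,\dots\}$. $T$ is the left shift: $T\{x_1,x_2,\dots\}=\{x_2,x_3,\dots\}$. A Banach limit functional is a bounded linear functional $L$ on $l^\infty(V)$ with $\|L\|\le1$ and $L(Tx)=L(x)$ for all $x$. A sequence $x\in l^\infty(V)$ is strongly almost convergent to $v\in V$ if $L(x)=L(\widetilde v)$ for every Banach limit functional $L$. For $x\in l^\infty(V)$, $p(x):=\lim_{n\to\infty}\left(\sup_{j\in\mathbb{N}}\frac1n\left\|\sum_{i=0}^{n-1}x_{i+j}\right\|_V\right)$ (this limit exists). *)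

From Stdlib Require Import Reals.
Open Scope R_scope.

Definition C : Type := (R * R)%type.
Definition C0 : C := (0, 0).
Definition C1 : C := (1, 0).
Definition Cplus (a b : C) : C := (fst a + fst b, snd a + snd b).
Definition Cmult (a b : C) : C :=
  (fst a * fst b - snd a * snd b, fst a * snd b + snd a * fst b).
Definition Cmod (a : C) : R := sqrt (fst a ^ 2 + snd a ^ 2).

Record CNormedSpace : Type := {
  carrier :> Type;
  vzero : carrier;
  vadd : carrier -> carrier -> carrier;
  vopp : carrier -> carrier;
  vscal : C -> carrier -> carrier;
  vnorm : carrier -> R;
  vadd_assoc : forall a b c, vadd a (vadd b c) = vadd (vadd a b) c;
  vadd_comm : forall a b, vadd a b = vadd b a;
  vadd_zero : forall a, vadd a vzero = a;
  vadd_opp : forall a, vadd a (vopp a) = vzero;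
  vscal_assoc : forall (s t : C) a, vscal s (vscal t a) = vscal (Cmult s t) a;
  vscal_one : forall a, vscal C1 a = a;
  vscal_distr_l : forall (s : C) a b, vscal s (vadd a b) = vadd (vscal s a) (vscal s b);
  vscal_distr_r : forall (s t : C) a, vscal (Cplus s t) a = vadd (vscal s a) (vscal t a);
  vnorm_nonneg : forall a, 0 <= vnorm a;
  vnorm_eq0 : forall a, vnorm a = 0 -> a = vzero;
  vnorm_scal : forall (s : C) a, vnorm (vscal s a) = Cmod s * vnorm a;
  vnorm_triangle : forall a b, vnorm (vadd a b) <= vnorm a + vnorm b
}.

Section Seq.
Variable V : CNormedSpace.

(** Sequences are indexed by nat starting at 0 (index n here = index n+1 in the paper). *)
Definition seq_bounded (x : nat -> V) : Prop :=
  exists M : R, forall n, vnorm V (x n) <= M.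

Definition const_seq (v : V) : nat -> V := fun _ => v.

Definition shift (x : nat -> V) : nat -> V := fun n => x (S n).

Definition seq_add (x y : nat -> V) : nat -> V := fun n => vadd V (x n) (y n).
Definition seq_scal (c : C) (x : nat -> V) : nat -> V := fun n => vscal V c (x n).
Definition seq_sub (x y : nat -> V) : nat -> V := fun n => vadd V (x n) (vopp V (y n)).

(** It is given as a function on all sequences but constrained only on seq_bounded ones,
    which is equivalent to a functional on l^oo(V). *)
Definition BanachLimit (L : (nat -> V) -> C) : Prop :=
  (forall x y, seq_bounded x -> seq_bounded y -> L (seq_add x y) = Cplus (L x) (L y)) /\
  (forall c x, seq_bounded x -> L (seq_scal c x) = Cmult c (L x)) /\
  (forall x M, seq_bounded x -> (forall n, vnorm V (x n) <= M) -> Cmod (L x) <= M) /\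
  (forall x, seq_bounded x -> L (shift x) = L x).

Definition strongly_almost_convergent (x : nat -> V) (v : V) : Prop :=
  forall L, BanachLimit L -> L x = L (const_seq v).

Fixpoint block_sum (x : nat -> V) (j n : nat) : V :=
  match n with
  | O => vzero V
  | S m => vadd V (block_sum x j m) (x (m + j)%nat)
  end.

(** a n = sup_j (1/(n+1)) || sum_{i=0}^{n} x_{i+j} ||  (paper's n shifted by one) *)
Definition avg_sup (x : nat -> V) (n : nat) (s : R) : Prop :=
  is_lub (fun r => exists j : nat,
            r = / INR (S n) * vnorm V (block_sum x j (S n))) s.

Definition p_is (x : nat -> V) (l : R) : Prop :=
  exists a : nat -> R, (forall n, avg_sup x n (a n)) /\ Un_cv a l.

End Seq.

From Pilot Require Import Defs.
From Stdlib Require Import Reals Lra Lia Classical ClassicalEpsilon FunctionalExtensionality.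
From mathcomp Require boolp classical_sets.
Import Defs.
Open Scope R_scope.

(** For a bounded sequence [y] in [l^oo(V)] let
    [a_n(y) = sup_j (1/(n+1)) || sum_{i<=n} y_{i+j} ||] and [p(y) = lim a_n(y)].
    With [y = x - v~], [x] is strongly almost convergent to [v] iff every
    Banach limit vanishes on [y]; we show this happens iff [p(y) = 0].

    - If [p(y) = 0]: a Banach limit [L] takes the same value on [y] and on the
      sequence of its block averages, whose norms are bounded by [a_n(y)]; hence
      [|L y| <= a_n(y)] for all [n], and [L y = 0].
    - Conversely, [p] is a sublinear functional on bounded sequences, viewed as a
      real vector space (from [a_N <= a_m + (m+1) M/(N+1)] the [a_n] converge to
      their infimum, and inequalities pass to the limit), and [p(T x - x) = 0]
      since the block sums of [T x - x] telescope.  Hahn-Banach yields a real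
      linear [f <= p] with [f y = p y]; [f] is shift-invariant, and
      [L x = f x - i f (i x)] is a Banach limit with [Re (L y) = p(y)].  Strong
      almost convergence then forces [p(y) = 0]. *)

(** The least upper bound of a nonempty bounded set of reals (0 otherwise),
    and the greatest lower bound obtained from it by symmetry. *)
Definition lubR (E : R -> Prop) : R :=
  match excluded_middle_informative (bound E /\ exists x, E x) with
  | left h => proj1_sig (completeness E (proj1 h) (proj2 h))
  | right _ => 0
  end.

Lemma lubR_spec (E : R -> Prop) : bound E -> (exists x, E x) -> is_lub E (lubR E).
Proof.
  intros hb he. unfold lubR.
  destruct (excluded_middle_informative _) as [h|h].
  - exact (proj2_sig (completeness E (proj1 h) (proj2 h))).
  - exfalso; tauto.
Qed.

Definition glbR (E : R -> Prop) : R := - lubR (fun r => E (- r)).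

Lemma glbR_le (E : R -> Prop) (x : R) :
  (exists m, forall y, E y -> m <= y) -> E x -> glbR E <= x.
Proof.
  intros [m hm] hx. unfold glbR.
  assert (H : is_lub (fun r => E (- r)) (lubR (fun r => E (- r)))).
  { apply lubR_spec.
    - exists (- m). intros r hr. specialize (hm _ hr). lra.
    - exists (- x). rewrite Ropp_involutive. exact hx. }
  assert (h := proj1 H (- x)). cbv beta in h. rewrite Ropp_involutive in h.
  specialize (h hx). lra.
Qed.

Lemma le_glbR (E : R -> Prop) (c : R) :
  (exists x, E x) -> (forall y, E y -> c <= y) -> c <= glbR E.
Proof.
  intros [x hx] hc. unfold glbR.
  assert (H : is_lub (fun r => E (- r)) (lubR (fun r => E (- r)))).
  { apply lubR_spec.
    - exists (- c). intros r hr. specialize (hc _ hr). lra.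
    - exists (- x). rewrite Ropp_involutive. exact hx. }
  assert (h : lubR (fun r => E (- r)) <= - c).
  { apply (proj2 H). intros r hr. specialize (hc _ hr). lra. }
  lra.
Qed.

Lemma le_glbR_add (A B : R -> Prop) (c : R) :
  (exists x, A x) -> (exists x, B x) ->
  (forall a b, A a -> B b -> c <= a + b) -> c <= glbR A + glbR B.
Proof.
  intros hA hB H.
  assert (H1 : forall b, B b -> c - b <= glbR A).
  { intros b hb. apply le_glbR; auto. intros a ha. specialize (H a b ha hb). lra. }
  assert (H2 : c - glbR A <= glbR B).
  { apply le_glbR; auto. intros b hb. specialize (H1 b hb). lra. }
  lra.
Qed.

(** This is [ZL_preorder] of the MathComp classical library, transported from
    boolean relations on a type to propositional relations on a predicate. *)
Lemma zorn_preorder (T : Type) (P : T -> Prop) (le : T -> T -> Prop) :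
  (forall t, le t t) -> (forall r s t, le r s -> le s t -> le r t) ->
  (forall A : T -> Prop, (forall t, A t -> P t) ->
     (forall s t, A s -> A t -> le s t \/ le t s) ->
     exists u, P u /\ forall s, A s -> le s u) ->
  exists m, P m /\ forall s, P s -> le m s -> le s m.
Proof.
  intros le_refl le_trans chains.
  destruct (chains (fun _ => False)) as [t0 [Pt0 _]]; try tauto.
  pose (leb := fun s t : {t | P t} => boolp.asbool (le (proj1_sig s) (proj1_sig t))).
  assert (E : forall s t, leb s t = true <-> le (proj1_sig s) (proj1_sig t)).
  { intros s t. exact (conj (@boolp.asboolW _) (@boolp.asboolT _)). }
  destruct (classical_sets.ZL_preorder (exist P t0 Pt0) (R := leb)) as [[m Pm] Hm].
  - intro t. apply E, le_refl.
  - intros r s t hrs hst. apply E. apply E in hrs. apply E in hst. eauto.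
  - intros A HA.
    destruct (chains (fun t => exists Pt, A (exist P t Pt))) as [u [Pu Hu]].
    + intros t [Pt _]. exact Pt.
    + intros s t [Ps As] [Pt At].
      destruct (HA _ _ As At) as [h|h]; apply E in h; [left|right]; exact h.
    + exists (exist P u Pu). intros [s Ps] As. apply E, Hu. exists Ps; exact As.
  - exists m. split; [exact Pm|]. intros s Ps hms.
    apply (E (exist P s Ps) (exist P m Pm)), Hm, E, hms.
Qed.

Section HahnBanach.
Variables (X : Type) (add : X -> X -> X) (sc : R -> X -> X) (z : X) (W : X -> Prop).
Hypothesis W_add : forall x y, W x -> W y -> W (add x y).
Hypothesis W_sc : forall r x, W x -> W (sc r x).
Hypothesis add_assoc : forall x y w, add x (add y w) = add (add x y) w.
Hypothesis add_comm : forall x y, add x y = add y x.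
Hypothesis add_z : forall x, add x z = x.
Hypothesis sc_0 : forall x, sc 0 x = z.
Hypothesis sc_1 : forall x, sc 1 x = x.
Hypothesis sc_distr : forall r x y, sc r (add x y) = add (sc r x) (sc r y).
Hypothesis sc_plus : forall r t x, sc (r + t) x = add (sc r x) (sc t x).
Hypothesis sc_assoc : forall r t x, sc r (sc t x) = sc (r * t) x.

Definition subadditive (s : X -> R) : Prop :=
  forall x y, W x -> W y -> s (add x y) <= s x + s y.

Definition sublinear (s : X -> R) : Prop :=
  subadditive s /\ forall r x, W x -> 0 <= r -> s (sc r x) = r * s x.

Lemma add_opp (x : X) : add x (sc (-1) x) = z.
Proof.
  rewrite <- (sc_1 x) at 1. rewrite <- sc_plus. replace (1 + -1) with 0 by ring. apply sc_0.
Qed.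

Lemma add_swap (p q r u : X) : add (add p q) (add r u) = add (add p r) (add q u).
Proof.
  rewrite <- add_assoc. rewrite (add_assoc q r u). rewrite (add_comm q r).
  rewrite <- (add_assoc r q u). apply add_assoc.
Qed.

(** Positive homogeneity follows from the inequality [s (r x) <= r s x]
    (apply it to [1/r]), so sublinearity only needs inequalities. *)
Lemma sublinear_of_le (s : X -> R) : subadditive s ->
  (forall r x, W x -> 0 <= r -> s (sc r x) <= r * s x) -> sublinear s.
Proof.
  intros s_add s_le. split; [exact s_add|]. intros r x hx hr.
  destruct (Req_dec r 0) as [->|E0].
  - rewrite Rmult_0_l. apply Rle_antisym.
    + assert (h := s_le 0 x hx (Rle_refl 0)). lra.
    + rewrite sc_0. assert (Wz : W z) by (rewrite <- (sc_0 x); auto).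
      assert (h := s_add z z Wz Wz). rewrite add_z in h. lra.
  - apply Rle_antisym; auto.
    assert (h := s_le (/ r) (sc r x) (W_sc _ _ hx)).
    rewrite sc_assoc, Rinv_l, sc_1 in h by exact E0.
    assert (h2 : s x <= / r * s (sc r x)) by (apply h; left; apply Rinv_0_lt_compat; lra).
    apply (Rmult_le_compat_l r) in h2; [|lra].
    rewrite <- Rmult_assoc, Rinv_r, Rmult_1_l in h2 by exact E0. exact h2.
Qed.

Lemma sublinear_zero (s : X -> R) (x : X) : sublinear s -> W x -> s z = 0.
Proof. intros [_ h] hx. rewrite <- (sc_0 x). rewrite h; auto; lra. Qed.

Lemma sublinear_opp (s : X -> R) (x : X) : sublinear s -> W x -> 0 <= s x + s (sc (-1) x).
Proof.
  intros hs hx. rewrite <- (sublinear_zero s x hs hx), <- (add_opp x).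
  apply (proj1 hs); auto.
Qed.

(** The directional infimum [inf_{t >= 0} s (x + t a) - t s a]: a sublinear
    functional below [s] which is "linear in the direction [a]". *)
Definition dir_values (s : X -> R) (a x : X) (r : R) : Prop :=
  exists t, 0 <= t /\ r = s (add x (sc t a)) - t * s a.

Definition dir_inf (s : X -> R) (a x : X) : R := glbR (dir_values s a x).

Section DirInf.
Variables (s : X -> R) (a : X).
Hypotheses (s_sub : sublinear s) (Wa : W a).

(** [dir_inf s a x] is bounded below by [- s (-x)], so it lies below each of its values. *)
Lemma dir_inf_le (x : X) (t : R) : W x -> 0 <= t ->
  dir_inf s a x <= s (add x (sc t a)) - t * s a.
Proof.
  intros hx ht. apply glbR_le; [|exists t; auto].
  exists (- s (sc (-1) x)). intros y [u [hu ->]].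
  assert (E : sc u a = add (add x (sc u a)) (sc (-1) x)).
  { rewrite (add_comm x (sc u a)), <- add_assoc, add_opp. now rewrite add_z. }
  assert (h := proj1 s_sub (add x (sc u a)) (sc (-1) x) (W_add _ _ hx (W_sc _ _ Wa)) (W_sc _ _ hx)).
  rewrite <- E, (proj2 s_sub) in h; auto. lra.
Qed.

Lemma le_dir_inf (x : X) (c : R) :
  (forall t, 0 <= t -> c <= s (add x (sc t a)) - t * s a) -> c <= dir_inf s a x.
Proof.
  intro H. apply le_glbR; [exists (s (add x (sc 0 a)) - 0 * s a); exists 0; split; auto; lra|].
  intros y [t [ht ->]]. auto.
Qed.

Lemma dir_inf_le_self (x : X) : W x -> dir_inf s a x <= s x.
Proof. intro hx. assert (h := dir_inf_le x 0 hx (Rle_refl 0)). rewrite sc_0, add_z in h. lra. Qed.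

Lemma dir_inf_opp : dir_inf s a (sc (-1) a) <= - s a.
Proof.
  assert (h := dir_inf_le (sc (-1) a) 1 (W_sc _ _ Wa) Rle_0_1).
  rewrite sc_1, add_comm, add_opp, (sublinear_zero s a s_sub Wa) in h. lra.
Qed.

Lemma dir_inf_sublinear : sublinear (dir_inf s a).
Proof.
  apply sublinear_of_le.
  - intros x y hx hy. apply le_glbR_add.
    + exists (s (add x (sc 0 a)) - 0 * s a). exists 0; split; auto; lra.
    + exists (s (add y (sc 0 a)) - 0 * s a). exists 0; split; auto; lra.
    + intros u v [t [ht ->]] [w [hw ->]].
      eapply Rle_trans; [apply (dir_inf_le _ (t + w)); auto; lra|].
      rewrite sc_plus, add_swap.
      assert (h := proj1 s_sub _ _ (W_add _ _ hx (W_sc t _ Wa)) (W_add _ _ hy (W_sc w _ Wa))).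
      lra.
  - intros r x hx hr. destruct (Req_dec r 0) as [->|E0].
    + rewrite sc_0, Rmult_0_l.
      assert (h := dir_inf_le z 0 (eq_ind _ W (W_sc 0 x hx) _ (sc_0 x)) (Rle_refl 0)).
      rewrite sc_0, add_z, (sublinear_zero s x s_sub hx) in h. lra.
    + assert (H : dir_inf s a (sc r x) / r <= dir_inf s a x).
      { apply le_dir_inf. intros t ht.
        assert (h := dir_inf_le (sc r x) (r * t) (W_sc _ _ hx) ltac:(nra)).
        rewrite <- sc_assoc, <- sc_distr, (proj2 s_sub) in h; auto.
        apply (Rmult_le_reg_l r); [lra|]. field_simplify; [|lra]. lra. }
      apply (Rmult_le_compat_l r) in H; [|lra]. field_simplify in H; lra.
Qed.
End DirInf.

Variable q : X -> R.
Hypothesis q_sub : sublinear q.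

(** The candidates of the Zorn argument: sublinear functionals dominated by [q]. *)
Definition dominated (s : X -> R) : Prop := sublinear s /\ forall x, W x -> s x <= q x.

Definition chain_inf (C : (X -> R) -> Prop) (x : X) : R := glbR (fun r => exists s, C s /\ r = s x).

Lemma chain_inf_dominated (C : (X -> R) -> Prop) (s0 : X -> R) :
  C s0 -> (forall s, C s -> dominated s) ->
  (forall s1 s2, C s1 -> C s2 -> (forall x, W x -> s1 x <= s2 x) \/ (forall x, W x -> s2 x <= s1 x)) ->
  dominated (chain_inf C) /\ forall s x, C s -> W x -> chain_inf C x <= s x.
Proof.
  intros Cs0 Cdom Cchain.
  assert (ne : forall x, exists r, exists s, C s /\ r = s x) by (intro x; exists (s0 x), s0; auto).
  assert (below : forall s x, C s -> W x -> chain_inf C x <= s x).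
  { intros s x Cs hx. apply glbR_le; [|exists s; auto].
    exists (- q (sc (-1) x)). intros y [s' [Cs' ->]].
    destruct (Cdom s' Cs') as [ss sq].
    assert (h1 := sublinear_opp s' x ss hx). assert (h2 := sq _ (W_sc (-1) _ hx)). lra. }
  split; [split|exact below].
  - apply sublinear_of_le.
    + intros x y hx hy. apply le_glbR_add; auto.
      intros u v [s1 [C1 ->]] [s2 [C2 ->]].
      destruct (Cdom s1 C1) as [[s1a _] _], (Cdom s2 C2) as [[s2a _] _].
      destruct (Cchain s1 s2 C1 C2) as [h|h].
      * eapply Rle_trans; [apply (below s1); auto|].
        specialize (s1a x y hx hy). specialize (h y hy). lra.
      * eapply Rle_trans; [apply (below s2); auto|].
        specialize (s2a x y hx hy). specialize (h x hx). lra.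
    + intros r x hx hr. destruct (Req_dec r 0) as [->|E0].
      * rewrite Rmult_0_l. eapply Rle_trans; [apply (below s0); auto|].
        destruct (Cdom s0 Cs0) as [[_ h] _]. rewrite h; auto; lra.
      * assert (H : chain_inf C (sc r x) / r <= chain_inf C x).
        { apply le_glbR; auto. intros e [s [Cs ->]].
          assert (h := below s (sc r x) Cs (W_sc _ _ hx)).
          destruct (Cdom s Cs) as [[_ hh] _]. rewrite hh in h; auto.
          apply (Rmult_le_reg_l r); [lra|]. field_simplify; [|lra]. lra. }
        apply (Rmult_le_compat_l r) in H; [|lra]. field_simplify in H; lra.
  - intros x hx. eapply Rle_trans; [apply (below s0); auto|]. apply (Cdom s0 Cs0); auto.
Qed.

(** A minimal dominated functional is odd: otherwise its directional infimum
    in a direction [a] with [m (-a) <> - m a] would be strictly smaller. *)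
Lemma minimal_dominated_odd (m : X -> R) : dominated m ->
  (forall s, dominated s -> (forall x, W x -> s x <= m x) -> forall x, W x -> m x <= s x) ->
  forall a, W a -> m (sc (-1) a) = - m a.
Proof.
  intros [ms mq] mmin a ha.
  assert (Pa : dominated (dir_inf m a)).
  { split; [apply dir_inf_sublinear; auto|].
    intros x hx. eapply Rle_trans; [apply dir_inf_le_self; auto|]. auto. }
  assert (h1 := mmin _ Pa (fun x hx => dir_inf_le_self m a ms ha x hx) _ (W_sc (-1) _ ha)).
  assert (h2 := dir_inf_opp m a ms ha).
  assert (h3 := sublinear_opp m a ms ha). lra.
Qed.

Lemma odd_sublinear_linear (m : X -> R) : sublinear m ->
  (forall a, W a -> m (sc (-1) a) = - m a) ->
  (forall x y, W x -> W y -> m (add x y) = m x + m y) /\ (forall r x, W x -> m (sc r x) = r * m x).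
Proof.
  intros [m_add m_hom] m_odd. split.
  - intros x y hx hy. apply Rle_antisym; [auto|].
    assert (h := m_add _ _ (W_sc (-1) _ hx) (W_sc (-1) _ hy)).
    rewrite <- sc_distr, !m_odd in h; auto. lra.
  - intros r x hx. destruct (Rle_lt_dec 0 r) as [hr|hr]; [auto|].
    replace (sc r x) with (sc (-1) (sc (- r) x)) by (rewrite sc_assoc; f_equal; ring).
    rewrite m_odd, m_hom; auto; lra.
Qed.

Theorem hahn_banach (y0 : X) : W y0 -> exists f : X -> R,
  (forall x y, W x -> W y -> f (add x y) = f x + f y) /\
  (forall r x, W x -> f (sc r x) = r * f x) /\
  (forall x, W x -> f x <= q x) /\ f y0 = q y0.
Proof.
  intro hy0.
  (* Zorn yields a minimal dominated [m] with [m (-y0) <= - q y0]; [m] is linear,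
     so [q y0 <= m y0 <= q y0].  The candidate set contains [dir_inf q y0]. *)
  pose (P := fun s => dominated s /\ s (sc (-1) y0) <= - q y0).
  assert (P0 : P (dir_inf q y0)).
  { split; [split|].
    - apply dir_inf_sublinear; auto.
    - intros x hx. apply dir_inf_le_self; auto.
    - apply dir_inf_opp; auto. }
  destruct (zorn_preorder (X -> R) P (fun s1 s2 => forall x, W x -> s2 x <= s1 x))
    as [m [[mdom my] mmin]].
  - intros s x hx; lra.
  - intros s1 s2 s3 h1 h2 x hx. specialize (h1 x hx); specialize (h2 x hx); lra.
  - intros C CP Cch. destruct (classic (exists s, C s)) as [[s0 Cs0]|NC].
    + destruct (chain_inf_dominated C s0 Cs0) as [dom below].
      * intros s Cs. apply (CP s Cs).
      * intros s1 s2 C1 C2. destruct (Cch s1 s2 C1 C2); auto.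
      * exists (chain_inf C). split; [split; [exact dom|]|].
        -- eapply Rle_trans; [apply below; eauto|]. apply (CP s0 Cs0).
        -- intros s Cs x hx. apply below; auto.
    + exists (dir_inf q y0). split; [exact P0|]. intros s Cs; exfalso; eauto.
  - assert (m_odd := minimal_dominated_odd m mdom
      (fun s sdom hsm => mmin s (conj sdom (Rle_trans _ _ _ (hsm _ (W_sc _ _ hy0)) my)) hsm)).
    destruct (odd_sublinear_linear m (proj1 mdom) m_odd) as [m_add m_sc].
    exists m. repeat split; auto; [apply mdom|].
    rewrite m_odd in my; auto. apply Rle_antisym; [apply mdom; auto|lra].
Qed.
End HahnBanach.

Lemma C_eq (a b : C) : fst a = fst b -> snd a = snd b -> a = b.
Proof. destruct a, b; simpl; intros -> ->; reflexivity. Qed.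

Lemma Cmod_nonneg (c : C) : 0 <= Cmod c.
Proof. apply sqrt_pos. Qed.

Lemma Cmod_real (r : R) : Cmod (r, 0) = Rabs r.
Proof. unfold Cmod; simpl. rewrite <- sqrt_Rsqr_abs. f_equal. unfold Rsqr. ring. Qed.

Lemma Cmod_le0 (c : C) : Cmod c <= 0 -> c = C0.
Proof.
  intro h. assert (h0 := Cmod_nonneg c). destruct c as [u w]. unfold Cmod in *; simpl in *.
  assert (E : sqrt (u * (u * 1) + w * (w * 1)) = 0) by lra. clear h h0.
  apply sqrt_eq_0 in E; [|nra]. apply C_eq; unfold C0; simpl; nra.
Qed.

Lemma Cmod_rotation (w : C) : exists c, Cmod c <= 1 /\ fst (Cmult c w) = Cmod w.
Proof.
  destruct w as [u v]. set (m := Cmod (u, v)).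
  assert (mm : m * m = u * u + v * v).
  { unfold m, Cmod; simpl. rewrite sqrt_sqrt; [ring|nra]. }
  destruct (Req_dec m 0) as [E|E].
  - exists C0. unfold C0. rewrite Cmod_real, Rabs_R0. simpl. split; lra.
  - exists (u / m, - v / m). split.
    + right. unfold Cmod; simpl.
      replace (u / m * (u / m * 1) + - v / m * (- v / m * 1)) with ((u * u + v * v) / (m * m)) by (field; auto).
      rewrite <- mm, Rdiv_diag by (apply Rmult_integral_contrapositive; auto). apply sqrt_1.
    + simpl. replace (u / m * u - - v / m * v) with ((u * u + v * v) / m) by (field; auto).
      rewrite <- mm. field; auto.
Qed.

Lemma cv_const (c : R) : Un_cv (fun _ => c) c.
Proof. intros eps he. exists 0%nat. intros n _. rewrite Rdist_eq. exact he. Qed.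

Lemma cv_inv_succ (K : R) : Un_cv (fun N => K / INR (S N)) 0.
Proof.
  replace 0 with (K * 0) by ring. apply CV_mult; [apply cv_const|].
  intros eps he. destruct (@RinvN_cv eps he) as [N hN]. exists N. intros n hn.
  rewrite S_INR. exact (hN n hn).
Qed.

Lemma le_cv0 (c : R) (a : nat -> R) : (forall n, c <= a n) -> Un_cv a 0 -> c <= 0.
Proof. intros H ha. exact (Rle_cv_lim H (cv_const c) ha). Qed.

Section VectorSpace.
Variable V : CNormedSpace.

Lemma vadd_zero_l (a : V) : vadd V (vzero V) a = a.
Proof. rewrite vadd_comm; apply vadd_zero. Qed.

Lemma vadd_cancel (a b c : V) : vadd V a b = vadd V a c -> b = c.
Proof.
  intro h. rewrite <- (vadd_zero_l b), <- (vadd_zero_l c), <- (vadd_opp V a), (vadd_comm V a).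
  rewrite <- !vadd_assoc. now rewrite h.
Qed.

Lemma vscal_C0 (a : V) : vscal V C0 a = vzero V.
Proof.
  apply (vadd_cancel (vscal V C0 a)). rewrite vadd_zero, <- vscal_distr_r.
  f_equal. apply C_eq; simpl; ring.
Qed.

Lemma vscal_zero (c : C) : vscal V c (vzero V) = vzero V.
Proof.
  apply (vadd_cancel (vscal V c (vzero V))). rewrite vadd_zero, <- vscal_distr_l.
  now rewrite vadd_zero.
Qed.

Definition m1 : C := (-1, 0).

Lemma vopp_scal (a : V) : vopp V a = vscal V m1 a.
Proof.
  apply (vadd_cancel a). rewrite vadd_opp. rewrite <- (vscal_one V a) at 1.
  rewrite <- vscal_distr_r, <- (vscal_C0 a). f_equal. apply C_eq; simpl; ring.
Qed.

Lemma vnorm_zero : vnorm V (vzero V) = 0.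
Proof.
  rewrite <- (vscal_C0 (vzero V)), vnorm_scal. unfold C0. rewrite Cmod_real, Rabs_R0. ring.
Qed.

Lemma vnorm_opp (a : V) : vnorm V (vopp V a) = vnorm V a.
Proof. rewrite vopp_scal, vnorm_scal. unfold m1. rewrite Cmod_real, Rabs_left by lra. ring. Qed.

Lemma vadd_swap (p q r u : V) : vadd V (vadd V p q) (vadd V r u) = vadd V (vadd V p r) (vadd V q u).
Proof.
  rewrite <- vadd_assoc, (vadd_assoc V q r u), (vadd_comm V q r), <- (vadd_assoc V r q u).
  apply vadd_assoc.
Qed.
End VectorSpace.

Section Sequences.
Variable V : CNormedSpace.
Notation seq := (nat -> V).
Notation bs := (block_sum V).

Definition bounded_by (x : seq) (M : R) : Prop := forall n, vnorm V (x n) <= M.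

Lemma bounded_by_nonneg (x : seq) (M : R) : bounded_by x M -> 0 <= M.
Proof. intro h. eapply Rle_trans; [apply vnorm_nonneg|apply (h 0%nat)]. Qed.

Lemma bounded_by_add (x y : seq) (Mx My : R) :
  bounded_by x Mx -> bounded_by y My -> bounded_by (seq_add V x y) (Mx + My).
Proof.
  intros h1 h2 n. unfold seq_add. eapply Rle_trans; [apply vnorm_triangle|].
  specialize (h1 n); specialize (h2 n); lra.
Qed.

Lemma bounded_by_scal (c : C) (x : seq) (M : R) :
  bounded_by x M -> bounded_by (seq_scal V c x) (Cmod c * M).
Proof.
  intros h n. unfold seq_scal. rewrite vnorm_scal.
  apply Rmult_le_compat_l; [apply Cmod_nonneg|auto].
Qed.

Lemma seq_bounded_add (x y : seq) : seq_bounded V x -> seq_bounded V y -> seq_bounded V (seq_add V x y).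
Proof. intros [M1 h1] [M2 h2]. exists (M1 + M2). apply bounded_by_add; auto. Qed.

Lemma seq_bounded_scal (c : C) (x : seq) : seq_bounded V x -> seq_bounded V (seq_scal V c x).
Proof. intros [M h]. exists (Cmod c * M). apply bounded_by_scal; auto. Qed.

Lemma seq_bounded_shift (x : seq) : seq_bounded V x -> seq_bounded V (shift V x).
Proof. intros [M h]. exists M. intro n. apply h. Qed.

Lemma seq_bounded_const (v : V) : seq_bounded V (const_seq V v).
Proof. exists (vnorm V v). intro n. apply Rle_refl. Qed.

Lemma seq_sub_add (x w : seq) : seq_sub V x w = seq_add V x (seq_scal V m1 w).
Proof.
  apply functional_extensionality; intro n. unfold seq_sub, seq_add, seq_scal.
  now rewrite vopp_scal.
Qed.

Lemma seq_bounded_sub (x w : seq) : seq_bounded V x -> seq_bounded V w -> seq_bounded V (seq_sub V x w).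
Proof. intros hx hw. rewrite seq_sub_add. apply seq_bounded_add, seq_bounded_scal; auto. Qed.

Lemma block_sum_norm (x : seq) (M : R) (j n : nat) :
  bounded_by x M -> vnorm V (bs x j n) <= INR n * M.
Proof.
  intro h. induction n as [|n IH]; simpl block_sum.
  - rewrite vnorm_zero. simpl; lra.
  - eapply Rle_trans; [apply vnorm_triangle|]. rewrite S_INR. specialize (h (n + j)%nat). lra.
Qed.

Lemma block_sum_add (x y : seq) (j n : nat) : bs (seq_add V x y) j n = vadd V (bs x j n) (bs y j n).
Proof.
  induction n as [|n IH]; simpl.
  - now rewrite vadd_zero.
  - rewrite IH. apply vadd_swap.
Qed.

Lemma block_sum_scal (c : C) (x : seq) (j n : nat) : bs (seq_scal V c x) j n = vscal V c (bs x j n).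
Proof.
  induction n as [|n IH]; simpl.
  - now rewrite vscal_zero.
  - now rewrite IH, vscal_distr_l.
Qed.

Lemma block_sum_split (x : seq) (j p r : nat) : bs x j (p + r) = vadd V (bs x j p) (bs x (j + p) r).
Proof.
  induction r as [|r IH].
  - rewrite Nat.add_0_r. simpl. now rewrite vadd_zero.
  - rewrite Nat.add_succ_r. simpl. rewrite IH, <- vadd_assoc. do 3 f_equal. lia.
Qed.

Lemma block_sum_telescope (x : seq) (j n : nat) :
  bs (seq_sub V (shift V x) x) j n = vadd V (x (n + j)%nat) (vopp V (x j)).
Proof.
  induction n as [|n IH]; simpl.
  - now rewrite vadd_opp.
  - rewrite IH. unfold seq_sub, shift. simpl.
    rewrite (vadd_comm V (x (S (n + j))) (vopp V (x (n + j)%nat))), vadd_swap.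
    rewrite vadd_opp, vadd_zero_l. apply vadd_comm.
Qed.
End Sequences.

Section Averages.
Variable V : CNormedSpace.
Notation seq := (nat -> V).
Notation bs := (block_sum V).

Lemma INR_S_pos (n : nat) : 0 < INR (S n).
Proof. apply lt_0_INR; lia. Qed.

Definition avg_set (x : seq) (n : nat) (r : R) : Prop :=
  exists j, r = / INR (S n) * vnorm V (bs x j (S n)).

Definition sup_avg (x : seq) (n : nat) : R := lubR (avg_set x n).

Lemma avg_le_bound (x : seq) (M : R) (n j : nat) :
  bounded_by V x M -> / INR (S n) * vnorm V (bs x j (S n)) <= M.
Proof.
  intro h. assert (h1 := block_sum_norm V x M j (S n) h). assert (hp := INR_S_pos n).
  apply (Rmult_le_reg_l (INR (S n))); auto. field_simplify; lra.
Qed.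

Lemma sup_avg_spec (x : seq) (M : R) (n : nat) : bounded_by V x M -> avg_sup V x n (sup_avg x n).
Proof.
  intro h. apply lubR_spec.
  - exists M. intros r [j ->]. apply (avg_le_bound x M n j h).
  - exists (/ INR (S n) * vnorm V (bs x 0%nat (S n))). exists 0%nat; auto.
Qed.

Lemma sup_avg_ge (x : seq) (M : R) (n j : nat) :
  bounded_by V x M -> / INR (S n) * vnorm V (bs x j (S n)) <= sup_avg x n.
Proof. intro h. apply (proj1 (sup_avg_spec x M n h)). exists j; auto. Qed.

Lemma sup_avg_least (x : seq) (M c : R) (n : nat) : bounded_by V x M ->
  (forall j, / INR (S n) * vnorm V (bs x j (S n)) <= c) -> sup_avg x n <= c.
Proof. intros h H. apply (proj2 (sup_avg_spec x M n h)). intros r [j ->]. apply H. Qed.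

Lemma sup_avg_nonneg (x : seq) (M : R) (n : nat) : bounded_by V x M -> 0 <= sup_avg x n.
Proof.
  intro h. eapply Rle_trans; [|apply (sup_avg_ge x M n 0%nat h)].
  apply Rmult_le_pos; [left; apply Rinv_0_lt_compat, INR_S_pos|apply vnorm_nonneg].
Qed.

Lemma sup_avg_le_bound (x : seq) (M : R) (n : nat) : bounded_by V x M -> sup_avg x n <= M.
Proof. intro h. apply (sup_avg_least x M M n h). intro j. apply avg_le_bound, h. Qed.

(** Cutting a block of any length [n] into blocks of length [m+1] plus a short
    remainder: [|| sum_{i<n} x_{i+j} || <= n a_m + (m+1) M]. *)
Lemma block_sum_norm_le_sup_avg (x : seq) (M : R) (m : nat) : bounded_by V x M ->
  forall n j, vnorm V (bs x j n) <= INR n * sup_avg x m + INR (S m) * M.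
Proof.
  intros h n. induction n as [n IH] using (well_founded_induction Wf_nat.lt_wf). intro j.
  assert (hM := bounded_by_nonneg V x M h). assert (ha := sup_avg_nonneg x M m h).
  destruct (Nat.lt_ge_cases n (S m)) as [hl|hl].
  - eapply Rle_trans; [apply (block_sum_norm V x M j n h)|].
    assert (INR n <= INR (S m)) by (apply le_INR; lia).
    assert (0 <= INR n) by apply pos_INR. nra.
  - replace n with (S m + (n - S m))%nat by lia. rewrite block_sum_split.
    eapply Rle_trans; [apply vnorm_triangle|].
    assert (h1 := sup_avg_ge x M m j h). assert (hp := INR_S_pos m).
    assert (h1' : vnorm V (bs x j (S m)) <= INR (S m) * sup_avg x m).
    { apply (Rmult_le_compat_l (INR (S m))) in h1; [|lra]. field_simplify in h1; lra. }
    assert (h2 := IH (n - S m)%nat ltac:(lia) (j + S m)%nat).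
    rewrite plus_INR. lra.
Qed.

Lemma sup_avg_decay (x : seq) (M : R) (m N : nat) : bounded_by V x M ->
  sup_avg x N <= sup_avg x m + INR (S m) * M / INR (S N).
Proof.
  intro h. apply (sup_avg_least x M _ N h). intro j.
  assert (h1 := block_sum_norm_le_sup_avg x M m h (S N) j). assert (hp := INR_S_pos N).
  apply (Rmult_le_reg_l (INR (S N))); [lra|]. field_simplify; lra.
Qed.

Definition p_val (x : seq) : R := glbR (fun r => exists n, r = sup_avg x n).

Lemma p_val_le (x : seq) (M : R) (n : nat) : bounded_by V x M -> p_val x <= sup_avg x n.
Proof.
  intro h. apply glbR_le; [|exists n; auto].
  exists 0. intros y [k ->]. apply (sup_avg_nonneg x M k h).
Qed.

Lemma p_val_nonneg (x : seq) (M : R) : bounded_by V x M -> 0 <= p_val x.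
Proof.
  intro h. apply le_glbR; [exists (sup_avg x 0); exists 0%nat; auto|].
  intros y [n ->]. apply (sup_avg_nonneg x M n h).
Qed.

(** [a_n] converges to its infimum, so [p_val] is the limit defining [p]. *)
Lemma sup_avg_cv (x : seq) (M : R) : bounded_by V x M -> Un_cv (sup_avg x) (p_val x).
Proof.
  intros h eps he.
  assert (Em : exists m, sup_avg x m < p_val x + eps / 2).
  { apply NNPP; intro N.
    assert (hh : p_val x + eps / 2 <= p_val x).
    { apply le_glbR; [exists (sup_avg x 0); exists 0%nat; auto|].
      intros y [n ->]. apply Rnot_lt_le; intro hl; apply N; eauto. }
    lra. }
  destruct Em as [m hm].
  destruct (cv_inv_succ (INR (S m) * M) (eps / 2)) as [N0 hN0]; [lra|].
  exists N0. intros n hn. specialize (hN0 n hn). unfold Rdist in *.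
  rewrite Rminus_0_r in hN0. assert (hd := Rle_abs (INR (S m) * M / INR (S n))).
  assert (e := sup_avg_decay x M m n h). assert (e' := p_val_le x M n h).
  rewrite Rabs_right; lra.
Qed.

Lemma p_is_p_val (x : seq) (M : R) : bounded_by V x M -> p_is V x (p_val x).
Proof. intro h. exists (sup_avg x). split; [intro n; exact (sup_avg_spec x M n h)|exact (sup_avg_cv x M h)]. Qed.
End Averages.

Section Seminorm.
Variable V : CNormedSpace.
Notation seq := (nat -> V).
Notation bs := (block_sum V).

Lemma sup_avg_add (x y : seq) (Mx My : R) (n : nat) : bounded_by V x Mx -> bounded_by V y My ->
  sup_avg V (seq_add V x y) n <= sup_avg V x n + sup_avg V y n.
Proof.
  intros hx hy. apply (sup_avg_least V _ _ _ n (bounded_by_add V x y Mx My hx hy)).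
  intro j. rewrite block_sum_add.
  assert (a1 := sup_avg_ge V x Mx n j hx). assert (a2 := sup_avg_ge V y My n j hy).
  assert (t := vnorm_triangle V (bs x j (S n)) (bs y j (S n))).
  assert (hp := Rinv_0_lt_compat _ (INR_S_pos n)).
  apply (Rmult_le_compat_l (/ INR (S n))) in t; lra.
Qed.

Lemma sup_avg_scal (c : C) (x : seq) (M : R) (n : nat) : bounded_by V x M ->
  sup_avg V (seq_scal V c x) n <= Cmod c * sup_avg V x n.
Proof.
  intro h. apply (sup_avg_least V _ _ _ n (bounded_by_scal V c x M h)).
  intro j. rewrite block_sum_scal, vnorm_scal.
  assert (a1 := sup_avg_ge V x M n j h). assert (hc := Cmod_nonneg c).
  apply (Rmult_le_compat_l (Cmod c)) in a1; auto. lra.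
Qed.

Lemma p_val_add (x y : seq) (Mx My : R) : bounded_by V x Mx -> bounded_by V y My ->
  p_val V (seq_add V x y) <= p_val V x + p_val V y.
Proof.
  intros hx hy. apply (Rle_cv_lim (Un := fun _ => p_val V (seq_add V x y))
    (Vn := fun n => sup_avg V x n + sup_avg V y n)).
  - intro n. eapply Rle_trans; [apply (p_val_le V _ _ n (bounded_by_add V x y Mx My hx hy))|].
    apply (sup_avg_add x y Mx My n hx hy).
  - apply cv_const.
  - apply CV_plus; [apply (sup_avg_cv V x Mx hx)|apply (sup_avg_cv V y My hy)].
Qed.

Lemma p_val_scal (c : C) (x : seq) (M : R) : bounded_by V x M ->
  p_val V (seq_scal V c x) <= Cmod c * p_val V x.
Proof.
  intro h. apply (Rle_cv_lim (Un := fun _ => p_val V (seq_scal V c x))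
    (Vn := fun n => Cmod c * sup_avg V x n)).
  - intro n. eapply Rle_trans; [apply (p_val_le V _ _ n (bounded_by_scal V c x M h))|].
    apply (sup_avg_scal c x M n h).
  - apply cv_const.
  - apply CV_mult; [apply cv_const|apply (sup_avg_cv V x M h)].
Qed.

(** [p (T x - x) = 0]: the block sums of [T x - x] telescope, so [a_N <= 2M/(N+1)]. *)
Lemma p_val_shift_diff (x : seq) (M : R) : bounded_by V x M ->
  p_val V (seq_sub V (shift V x) x) <= 0.
Proof.
  intro h. set (d := seq_sub V (shift V x) x).
  assert (hd : bounded_by V d (M + Cmod m1 * M)).
  { unfold d. rewrite seq_sub_add. apply bounded_by_add; [intro n; apply h|apply bounded_by_scal, h]. }
  apply (Rle_cv_lim (Un := fun _ => p_val V d) (Vn := fun N => 2 * M / INR (S N))).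
  - intro N. eapply Rle_trans; [apply (p_val_le V d _ N hd)|].
    apply (sup_avg_least V d _ _ N hd). intro j. unfold d. rewrite block_sum_telescope.
    assert (t := vnorm_triangle V (x (S N + j)%nat) (vopp V (x j))). rewrite vnorm_opp in t.
    assert (h1 := h (S N + j)%nat). assert (h2 := h j).
    assert (hi := Rinv_0_lt_compat _ (INR_S_pos N)).
    unfold Rdiv. rewrite (Rmult_comm (2 * M)). apply Rmult_le_compat_l; lra.
  - apply cv_const.
  - apply cv_inv_succ.
Qed.
End Seminorm.

Section BanachLimits.
Variable V : CNormedSpace.
Notation seq := (nat -> V).

Definition rsc (r : R) (x : seq) : seq := seq_scal V (r, 0) x.
Definition ci : C := (0, 1).

Lemma seq_scal_comp (c d : C) (x : seq) : seq_scal V c (seq_scal V d x) = seq_scal V (Cmult c d) x.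
Proof. apply functional_extensionality; intro n. apply vscal_assoc. Qed.

Lemma seq_scal_add (c : C) (x y : seq) :
  seq_scal V c (seq_add V x y) = seq_add V (seq_scal V c x) (seq_scal V c y).
Proof. apply functional_extensionality; intro n. apply vscal_distr_l. Qed.

Lemma seq_scal_plus (c d : C) (x : seq) :
  seq_scal V (Cplus c d) x = seq_add V (seq_scal V c x) (seq_scal V d x).
Proof. apply functional_extensionality; intro n. apply vscal_distr_r. Qed.

Lemma seq_scal_decomp (a b : R) (x : seq) :
  seq_scal V (a, b) x = seq_add V (rsc a x) (rsc b (seq_scal V ci x)).
Proof.
  unfold rsc. rewrite seq_scal_comp, <- seq_scal_plus. f_equal. apply C_eq; simpl; ring.
Qed.

Lemma p_val_sublinear : sublinear seq (seq_add V) rsc (seq_bounded V) (p_val V).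
Proof.
  apply (sublinear_of_le _ _ _ (const_seq V (vzero V))).
  - intros r x hx. apply seq_bounded_scal, hx.
  - intro x. apply functional_extensionality; intro n. apply vadd_zero.
  - intro x. apply functional_extensionality; intro n. apply vscal_C0.
  - intro x. apply functional_extensionality; intro n. apply vscal_one.
  - intros r t x. unfold rsc. rewrite seq_scal_comp. f_equal. apply C_eq; simpl; ring.
  - intros x y [Mx hx] [My hy]. exact (p_val_add V x y Mx My hx hy).
  - intros r x [M h] hr. unfold rsc. eapply Rle_trans; [apply (p_val_scal V _ x M h)|].
    rewrite Cmod_real, Rabs_right; lra.
Qed.

Lemma dominated_functional_exists (y0 : seq) : seq_bounded V y0 -> exists f : seq -> R,
  (forall x y, seq_bounded V x -> seq_bounded V y -> f (seq_add V x y) = f x + f y) /\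
  (forall r x, seq_bounded V x -> f (rsc r x) = r * f x) /\
  (forall x, seq_bounded V x -> f x <= p_val V x) /\ f y0 = p_val V y0.
Proof.
  apply (hahn_banach seq (seq_add V) rsc (const_seq V (vzero V)) (seq_bounded V)).
  - apply seq_bounded_add.
  - intros r x hx. apply seq_bounded_scal, hx.
  - intros x y w. apply functional_extensionality; intro n. apply vadd_assoc.
  - intros x y. apply functional_extensionality; intro n. apply vadd_comm.
  - intro x. apply functional_extensionality; intro n. apply vadd_zero.
  - intro x. apply functional_extensionality; intro n. apply vscal_C0.
  - intro x. apply functional_extensionality; intro n. apply vscal_one.
  - intros r x y. apply seq_scal_add.
  - intros r t x. unfold rsc. rewrite <- seq_scal_plus. f_equal. apply C_eq; simpl; ring.
  - intros r t x. unfold rsc. rewrite seq_scal_comp. f_equal. apply C_eq; simpl; ring.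
  - exact p_val_sublinear.
Qed.

Section Complexification.
Variable f : seq -> R.
Hypothesis f_add : forall x y, seq_bounded V x -> seq_bounded V y -> f (seq_add V x y) = f x + f y.
Hypothesis f_rsc : forall r x, seq_bounded V x -> f (rsc r x) = r * f x.
Hypothesis f_le_p : forall x, seq_bounded V x -> f x <= p_val V x.

Definition complexify (x : seq) : C := (f x, - f (seq_scal V ci x)).

Lemma complexify_add (x y : seq) : seq_bounded V x -> seq_bounded V y ->
  complexify (seq_add V x y) = Cplus (complexify x) (complexify y).
Proof.
  intros hx hy. unfold complexify. rewrite seq_scal_add, !f_add;
    try apply seq_bounded_scal; auto.
  apply C_eq; simpl; ring.
Qed.

Lemma complexify_scal (c : C) (x : seq) : seq_bounded V x ->
  complexify (seq_scal V c x) = Cmult c (complexify x).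
Proof.
  intro hx. destruct c as [a b]. unfold complexify.
  assert (hix := seq_bounded_scal V ci x hx).
  rewrite seq_scal_comp. replace (Cmult ci (a, b)) with (- b, a) by (apply C_eq; simpl; ring).
  rewrite !seq_scal_decomp, !f_add by (unfold rsc; repeat apply seq_bounded_scal; auto).
  rewrite !f_rsc by (repeat apply seq_bounded_scal; auto).
  apply C_eq; simpl; ring.
Qed.

(** [f] is shift-invariant since [p] vanishes on [T x - x] and on its negative. *)
Lemma f_shift (x : seq) : seq_bounded V x -> f (shift V x) = f x.
Proof.
  intros [M h]. assert (hx : seq_bounded V x) by (exists M; exact h).
  set (d := seq_sub V (shift V x) x).
  assert (hd : seq_bounded V d) by (apply seq_bounded_sub; auto using seq_bounded_shift).
  assert (fd : f d = f (shift V x) - f x).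
  { unfold d. rewrite seq_sub_add, f_add by auto using seq_bounded_shift, seq_bounded_scal.
    change (seq_scal V m1 x) with (rsc (-1) x). rewrite f_rsc by exact hx. ring. }
  assert (pd := p_val_shift_diff V x M h). fold d in pd.
  assert (h1 : f d <= 0) by (eapply Rle_trans; [apply f_le_p|]; auto).
  assert (h2 : f (rsc (-1) d) <= 0).
  { destruct hd as [Md hMd]. eapply Rle_trans; [apply f_le_p, seq_bounded_scal; exists Md; exact hMd|].
    eapply Rle_trans; [apply (p_val_scal V _ d Md hMd)|].
    rewrite Cmod_real, Rabs_left by lra. lra. }
  rewrite f_rsc in h2 by exact hd. lra.
Qed.

(** The modulus of [complexify x] is a value of [f] at a rotated sequence,
    hence at most [p x], which is at most [sup |x_n|]. *)
Lemma complexify_bound (x : seq) (M : R) : seq_bounded V x -> bounded_by V x M ->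
  Cmod (complexify x) <= M.
Proof.
  intros hx hM. destruct (Cmod_rotation (complexify x)) as [c [hc Ec]].
  rewrite <- Ec, <- complexify_scal by exact hx. simpl.
  eapply Rle_trans; [apply f_le_p, seq_bounded_scal, hx|].
  eapply Rle_trans; [apply (p_val_scal V c x M hM)|].
  assert (hp := p_val_nonneg V x M hM). assert (hc0 := Cmod_nonneg c).
  eapply Rle_trans; [|apply (sup_avg_le_bound V x M 0 hM)].
  eapply Rle_trans; [|apply (p_val_le V x M 0 hM)]. nra.
Qed.

Lemma complexify_banach_limit : BanachLimit V complexify.
Proof.
  split; [|split; [|split]].
  - exact complexify_add.
  - intros c x hx. exact (complexify_scal c x hx).
  - intros x M hx hM. exact (complexify_bound x M hx hM).
  - intros x hx. unfold complexify. rewrite f_shift by exact hx.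
    change (seq_scal V ci (shift V x)) with (shift V (seq_scal V ci x)).
    rewrite f_shift by (apply seq_bounded_scal, hx). reflexivity.
Qed.
End Complexification.

Lemma banach_limit_attaining_p (y : seq) : seq_bounded V y ->
  exists L, BanachLimit V L /\ fst (L y) = p_val V y.
Proof.
  intro hy. destruct (dominated_functional_exists y hy) as [f [fa [fr [fp fy]]]].
  exists (complexify f). split; [exact (complexify_banach_limit f fa fr fp)|exact fy].
Qed.
End BanachLimits.

Section BanachLimitProperties.
Variable V : CNormedSpace.
Notation seq := (nat -> V).
Notation bs := (block_sum V).
Variable L : seq -> C.
Hypothesis HL : BanachLimit V L.

Lemma banach_limit_shift_iter (z : seq) (k : nat) : seq_bounded V z ->
  L (fun j => z (k + j)%nat) = L z.
Proof.
  destruct HL as [_ [_ [_ Ls]]]. intros [M hz]. induction k as [|k IH]; [reflexivity|].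
  rewrite <- IH, <- (Ls (fun j => z (k + j)%nat)) by (exists M; intro n; apply hz).
  f_equal. apply functional_extensionality; intro n. unfold shift. f_equal. lia.
Qed.

Lemma banach_limit_block_sum (z : seq) (k : nat) : seq_bounded V z ->
  L (fun j => bs z j k) = Cmult (INR k, 0) (L z).
Proof.
  destruct HL as [La [Lsc _]]. intros [M hM]. induction k as [|k IH].
  - replace (fun j => bs z j 0) with (seq_scal V C0 z)
      by (apply functional_extensionality; intro n; apply vscal_C0).
    rewrite Lsc by (exists M; exact hM). reflexivity.
  - change (fun j => bs z j (S k)) with (seq_add V (fun j => bs z j k) (fun j => z (k + j)%nat)).
    rewrite La, IH, banach_limit_shift_iter by
      (exists M; exact hM) || (exists (INR k * M); intro j; apply block_sum_norm; exact hM)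
      || (exists M; intro j; apply hM).
    rewrite S_INR. apply C_eq; simpl; ring.
Qed.

(** [|L y|] is bounded by every supremum of block averages of [y],
    since [L y] is the value of [L] at the sequence of block averages. *)
Lemma banach_limit_le_sup_avg (y : seq) (n : nat) (s : R) :
  seq_bounded V y -> avg_sup V y n s -> Cmod (L y) <= s.
Proof.
  destruct HL as [La [Lsc [Lb Ls]]]. intros hy hs.
  assert (hp := INR_S_pos n).
  set (avg := seq_scal V (/ INR (S n), 0) (fun j => bs y j (S n))).
  assert (hb : seq_bounded V (fun j => bs y j (S n))).
  { destruct hy as [M hM]. exists (INR (S n) * M). intro j. apply block_sum_norm. exact hM. }
  assert (E : L avg = L y).
  { unfold avg. rewrite Lsc, banach_limit_block_sum by assumption.
    destruct (L y) as [u w]. unfold Cmult. apply C_eq; cbn [fst snd]; field; lra. }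
  rewrite <- E. apply Lb; [apply seq_bounded_scal, hb|].
  intro j. unfold avg, seq_scal. rewrite vnorm_scal, Cmod_real, Rabs_right
    by (left; apply Rinv_0_lt_compat, hp).
  apply (proj1 hs). exists j; reflexivity.
Qed.

Lemma banach_limit_vanishes (y : seq) : seq_bounded V y -> p_is V y 0 -> L y = C0.
Proof.
  intros hy [a [ha hc]]. apply Cmod_le0, (le_cv0 _ a); [|exact hc].
  intro n. exact (banach_limit_le_sup_avg y n (a n) hy (ha n)).
Qed.

Lemma banach_limit_eq_sub (x w : seq) : seq_bounded V x -> seq_bounded V w ->
  (L x = L w <-> L (seq_sub V x w) = C0).
Proof.
  destruct HL as [La [Lsc _]]. intros hx hw.
  rewrite seq_sub_add, La, Lsc by auto using seq_bounded_scal.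
  destruct (L x) as [a b], (L w) as [c d]. unfold Cplus, Cmult, C0, m1; simpl.
  split; intro h; injection h; intros; [subst; f_equal; ring|f_equal; lra].
Qed.
End BanachLimitProperties.

Theorem mainTheorem11 (V : CNormedSpace) (x : nat -> V) (v : V) :
  @seq_bounded V x ->
  (@strongly_almost_convergent V x v <-> @p_is V (@seq_sub V x (@const_seq V v)) 0).
Proof.
  intro hx. set (y := seq_sub V x (const_seq V v)).
  assert (hy : seq_bounded V y) by (apply seq_bounded_sub; auto using seq_bounded_const).
  split.
  - intro SAC. destruct hy as [M hM].
    destruct (banach_limit_attaining_p V y (ex_intro _ M hM)) as [L [HL Ly]].
    assert (L0 : L y = C0) by (apply banach_limit_eq_sub; auto using seq_bounded_const).
    rewrite L0 in Ly. simpl in Ly. rewrite Ly. exact (p_is_p_val V y M hM).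
  - intros Hp L HL. apply (banach_limit_eq_sub V L HL); auto using seq_bounded_const.
    exact (banach_limit_vanishes V L HL y hy Hp).
Qed.
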